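(* Every nice graph $G=(V,E)$ with $V\neq\emptyset$ has a good subset.
   Context: All graphs are finite and simple. An edge is isolated if both its ends have degree $1$; a graph is nice if it has no isolated edges. For $J\subseteq V$: $E_{J,2}$ is the set of isolated edges of $G-J$; $E_{J,3}$ the set of edges with exactly one end in $J$; $E_{J,4}$ the set of edges with both ends in $J$; $G_{J,3}=(V,E_{J,3})$ and $G_{J,4}=(J,E_{J,4})$. For $i\in V\setminus J$, if $N_{G_{J,3}}(i)=\{j\}$ then $i$ is a private neighbour of $j$. A set $J\subseteq V$ is a good subset if $J\neq\emptyset$ and: (J1) $G_{J,4}$ has maximum degree at most $1$; (J2) $G_{J,3}$ has no isolated edges; (J3) each $j\in J$ has at most one private neighbour; (J4) for each edge $e=\{j,j'\}\in E_{J,4}$ there is a vertex $i_e\in V\setminus J$ with $\{j,j'\}\subseteq N_{G_{J,3}}(i_e)$, neither $j$ nor $j'$ has a private neighbour, and $i_e\neq i_{e'}$ for distinct $e,e'\in E_{J,4}$; (J5) for every edge $e\in E_{J,2}$, each end vertex of $e$ has at least one neighbour in $J$. *)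

(* A finite simple graph is a symmetric irreflexive relation
   e on a finType T (vertex set V = T). *)
From mathcomp Require Import all_boot.
Set Implicit Arguments. Unset Strict Implicit. Unset Printing Implicit Defensive.

Section Graph.
Variables (T : finType) (e : rel T).

Definition nbhd (x : T) : {set T} := [set y | e x y].
Definition deg (x : T) : nat := #|nbhd x|.

Definition isolated_edge (x y : T) : Prop := e x y /\ deg x = 1 /\ deg y = 1.

Definition nice : Prop := forall x y : T, ~ isolated_edge x y.

Variable J : {set T}.

(* G - J : induced subgraph on V \ J *)
Definition e2 (x y : T) : bool := [&& e x y, x \notin J & y \notin J].
Definition deg2 (x : T) : nat := #|[set y | e2 x y]|.
Definition inE2 (x y : T) : Prop := e2 x y /\ deg2 x = 1 /\ deg2 y = 1.

Definition e3 (x y : T) : bool := e x y && ((x \in J) != (y \in J)).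
Definition N3 (x : T) : {set T} := [set y | e3 x y].
Definition deg3 (x : T) : nat := #|N3 x|.

Definition e4 (x y : T) : bool := [&& e x y, x \in J & y \in J].

Definition private_nb (j i : T) : bool := (i \notin J) && (N3 i == [set j]).
Definition privates (j : T) : {set T} := [set i | private_nb j i].

Definition J1 : Prop := forall j, j \in J -> #|[set y | e4 j y]| <= 1.
Definition J2 : Prop := forall x y, ~ (e3 x y /\ deg3 x = 1 /\ deg3 y = 1).
Definition J3 : Prop := forall j, j \in J -> #|privates j| <= 1.
(* the choice e |-> i_e is given as a function of the (unordered) edge {j,j'} *)
Definition J4 : Prop :=
  exists f : T -> T -> T,
    (forall j j', e4 j j' -> f j j' = f j' j) /\
    (forall j j', e4 j j' ->
       [/\ f j j' \notin J, j \in N3 (f j j'), j' \in N3 (f j j'),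
           privates j = set0 & privates j' = set0]) /\
    (forall j j' k k', e4 j j' -> e4 k k' -> f j j' = f k k' ->
       [set j; j'] = [set k; k']).
Definition J5 : Prop :=
  forall x y, inE2 x y ->
    (exists z, (z \in J) && e x z) /\ (exists z, (z \in J) && e y z).

Definition good_subset : Prop := J != set0 /\ J1 /\ J2 /\ J3 /\ J4 /\ J5.

End Graph.

From mathcomp Require Import all_boot.
From Stdlib Require Import Classical.
From mathcomp Require Import zify.
Set Implicit Arguments. Unset Strict Implicit. Unset Printing Implicit Defensive.

(* Call J admissible if J dominates G, G[J] is a matching, and the edges of
   G[J] have pairwise distinct common neighbours outside J (the map of (J4)).
   Maximal independent sets are admissible.  Among admissible sets pick one
   maximising lexicographically (|J|, #vertices isolated in G[J], #vertices
   of J of degree >= 2 in G).  Two local moves preserve admissibility: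
   - replacement: swap j for a maximum independent set of its private
     neighbours;
   - addition: if j is isolated in G[J] and has adjacent private neighbours
     p, q, add p, the new edge {j,p} being witnessed by q.
   Maximality against these moves shows that a vertex matched in G[J] has no
   private neighbour, an isolated one has at most one, and an isolated leaf
   has none (this uses that G is nice).  These facts give (J2)-(J4); (J1) and
   (J5) come from admissibility. *)

Lemma exists_maximizer (I : finType) (P : I -> Prop) (phi : I -> nat) :
  (exists i, P i) -> exists2 i, P i & forall j, P j -> phi j <= phi i.
Proof.
set B := \max_(i : I) phi i.
suff climb : forall k i, P i -> B - phi i <= k ->
    exists2 i, P i & forall j, P j -> phi j <= phi i.
  by case=> i Pi; exact: (climb _ i Pi (leqnn _)).
elim=> [|k IHk] i Pi Hk.
  exists i => // j _; apply: leq_trans (leq_bigmax j) _; lia.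
case: (classic (exists j, P j /\ phi i < phi j)) => [[j [Pj lt_ij]]|no_better].
  by apply: (IHk j Pj); have := leq_bigmax j; rewrite -/B; lia.
exists i => // j Pj; rewrite leqNgt; apply/negP => lt_ij.
by apply: no_better; exists j.
Qed.

(* Encoding of triples with last two coordinates at most n as numbers, so that
   the lexicographic order becomes the order of nat. *)
Definition lexw (n a b c : nat) : nat := (a * n.+1 + b) * n.+1 + c.

Lemma lexw_lt n a b c a' b' c' : b <= n -> c <= n -> b' <= n -> c' <= n ->
  [\/ a < a', (a <= a') && (b < b') | [&& a <= a', b <= b' & c < c']] ->
  lexw n a b c < lexw n a' b' c'.
Proof. by rewrite /lexw => hb hc hb' hc' [|/andP[]|/and3P[]]; nia. Qed.

Section Graph.
Variables (T : finType) (e : rel T).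
Hypotheses (esym : symmetric e) (eirr : irreflexive e).

Lemma N3_outside (J : {set T}) x y :
  x \notin J -> (y \in N3 e J x) = (y \in J) && e x y.
Proof. by move=> xJ; rewrite inE /e3 (negbTE xJ); case: (y \in J); rewrite ?andbT ?andbF. Qed.

Lemma N3_inside (J : {set T}) x y :
  x \in J -> (y \in N3 e J x) = (y \notin J) && e x y.
Proof. by move=> xJ; rewrite inE /e3 xJ; case: (y \in J); rewrite ?andbT ?andbF. Qed.

Lemma private_outside (J : {set T}) j i : i \in privates e J j -> i \notin J.
Proof. by rewrite inE => /andP[]. Qed.

Lemma private_unique (J : {set T}) j i k :
  i \in privates e J j -> k \in J -> e i k -> k = j.
Proof.
move=> iP kJ ik; have iJ := private_outside iP.
have : k \in N3 e J i by rewrite N3_outside // kJ ik.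
by move: iP; rewrite inE => /andP[_ /eqP->] /set1P.
Qed.

Lemma private_adj (J : {set T}) j i : i \in privates e J j -> j \in J /\ e i j.
Proof.
move=> iP; have iJ := private_outside iP.
have : j \in N3 e J i by move: iP; rewrite inE => /andP[_ /eqP->]; exact: set11.
by rewrite N3_outside // => /andP[].
Qed.

Lemma private_or_other_nb (J : {set T}) j x : x \notin J -> j \in J -> e x j ->
  x \in privates e J j \/ exists2 k, k \in J :\ j & e x k.
Proof.
move=> xJ jJ xj; case: (boolP [exists k in J :\ j, e x k]) => [/exists_inP|none].
  by right.
left; rewrite inE /private_nb xJ; apply/eqP/setP => k; rewrite N3_outside // inE.
apply/andP/eqP => [[kJ xk]|->//]; apply/eqP; apply: contraNT none => kj.
by apply/exists_inP; exists k; rewrite // !inE kj.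
Qed.

Lemma private_not_common_nb (J : {set T}) j i x y :
  i \in privates e J j -> e4 e J x y -> e i x -> e i y -> False.
Proof.
move=> iP /and3P[xy xJ yJ] ix iy.
by move: xy; rewrite (private_unique iP xJ ix) (private_unique iP yJ iy) eirr.
Qed.

Definition indep (A : {set T}) : bool := [forall a in A, forall b in A, ~~ e a b].

Lemma indepP (A : {set T}) a b : indep A -> a \in A -> b \in A -> ~~ e a b.
Proof. by move=> /forall_inP iA aA bA; move/forall_inP: (iA a aA); apply. Qed.

Lemma indep1 a : indep [set a].
Proof. by apply/forall_inP => x /set1P->; apply/forall_inP => y /set1P->; rewrite eirr. Qed.

Lemma indep2 a b : ~~ e a b -> indep [set a; b].
Proof.
move=> nab; apply/forall_inP => x /set2P xab; apply/forall_inP => y /set2P yab.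
by case: xab => ->; case: yab => ->; rewrite ?eirr // esym.
Qed.

Lemma maximum_independent (Q : {set T}) : exists A : {set T},
  [/\ A \subset Q, indep A,
      forall x, x \in Q -> x \notin A -> exists2 a, a \in A & e x a &
      forall B : {set T}, B \subset Q -> indep B -> #|B| <= #|A|].
Proof.
pose ok (A : {set T}) := (A \subset Q) && indep A.
have ok0 : ok set0 by rewrite /ok sub0set; apply/forall_inP => a; rewrite inE.
case: (arg_maxnP (fun A : {set T} => #|A|) ok0) => A /andP[AQ iA] Amax.
exists A; split => // [x xQ xA|B BQ iB]; last by apply: Amax; rewrite /ok BQ.
apply/exists_inP; apply: contraT => /exists_inPn noadj.
have : ok (x |: A).
  rewrite /ok subUset sub1set xQ AQ; apply/forall_inP => a /setU1P Ha.
  apply/forall_inP => b /setU1P Hb; case: Ha Hb => [->|aA] [->|bA].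
  - by rewrite eirr.
  - exact: noadj.
  - by rewrite esym; exact: noadj.
  - exact: indepP iA aA bA.
by move/Amax; rewrite cardsU1 xA /= add1n ltnn.
Qed.

Definition dominating (J : {set T}) : Prop :=
  forall x, x \notin J -> exists2 y, y \in J & e x y.

Definition inner_matching (J : {set T}) : Prop :=
  forall j k k', j \in J -> k \in J -> k' \in J -> e j k -> e j k' -> k = k'.

Definition witness_map (J : {set T}) (f : T -> T -> T) : Prop :=
  [/\ forall j j', e4 e J j j' -> f j j' = f j' j,
      forall j j', e4 e J j j' -> [/\ f j j' \notin J, e (f j j') j & e (f j j') j'] &
      forall j j' k k', e4 e J j j' -> e4 e J k k' -> f j j' = f k k' ->
        [set j; j'] = [set k; k']].

Definition admissible (J : {set T}) : Prop :=
  [/\ dominating J, inner_matching J & exists f, witness_map J f].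

(* A maximal independent set is admissible: G[J] has no edges at all. *)
Lemma admissible_exists : exists J, admissible J.
Proof.
case: (maximum_independent setT) => A [_ iA domA _].
have noedge a b : e4 e A a b -> False.
  by case/and3P=> ab aA bA; move: (indepP iA aA bA); rewrite ab.
exists A; split.
- by move=> x xA; exact: domA.
- by move=> j k k' jA kA _ jk; case: (noedge j k); rewrite /e4 jk jA kA.
- by exists (fun a _ => a); split=> [a b /noedge|a b /noedge|a b c d /noedge].
Qed.

Lemma witness_map_restrict (J J' : {set T}) f : witness_map J f ->
  (forall x y, e4 e J' x y -> e4 e J x y) ->
  (forall x y, e4 e J x y -> f x y \notin J') -> witness_map J' f.
Proof.
case=> fsym fadj finj sub out; split=> [x y /sub/fsym //|x y /sub Jxy|x y u v /sub Jxy /sub].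
  by case: (fadj _ _ Jxy); rewrite out.
exact: finj.
Qed.

Lemma witness_map_add_edge (J J' : {set T}) f a b q : witness_map J f ->
  (forall x y, e4 e J' x y -> [set x; y] = [set a; b] \/ e4 e J x y) ->
  (forall x y, e4 e J x y -> f x y \notin J' /\ f x y != q) ->
  q \notin J' -> e q a -> e q b ->
  witness_map J' (fun x y => if [set x; y] == [set a; b] then q else f x y).
Proof.
case=> fsym fadj finj edges fresh qJ' qa qb.
have q_adj x y : [set x; y] = [set a; b] -> e q x /\ e q y.
  move=> Exy; have : x \in [set a; b] by rewrite -Exy set21.
  have : y \in [set a; b] by rewrite -Exy set22.
  by do 2 case/set2P=> ->.
have old x y : e4 e J' x y -> [set x; y] != [set a; b] -> e4 e J x y.
  by move=> /edges[->|//]; rewrite eqxx.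
split=> [x y Exy|x y Exy|x y u v Exy Euv].
- rewrite (setUC [set y]); case: eqP => // /eqP nxy.
  exact: fsym (old _ _ Exy nxy).
- case: eqP => [/q_adj[]|/eqP/(old _ _ Exy) Jxy]; first by split.
  by case: (fadj _ _ Jxy) (fresh _ _ Jxy) => _ ? ? [? _].
- case: eqP => [->|/eqP nxy]; case: eqP => [->|/eqP nuv] //.
  + by move=> Ef; case: (fresh _ _ (old _ _ Euv nuv)); rewrite -Ef eqxx.
  + by move=> Ef; case: (fresh _ _ (old _ _ Exy nxy)); rewrite Ef eqxx.
  + exact: finj (old _ _ Exy nxy) (old _ _ Euv nuv).
Qed.

Definition isolated_in (J : {set T}) : {set T} := [set x in J | [forall y in J, ~~ e x y]].
Definition high_in (J : {set T}) : {set T} := [set x in J | 1 < deg e x].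

Lemma isolated_inP (J : {set T}) x :
  reflect (x \in J /\ forall y, y \in J -> ~~ e x y) (x \in isolated_in J).
Proof.
rewrite inE; apply: (iffP andP) => [[xJ /forall_inP noadj]|[xJ noadj]] //.
by split=> //; apply/forall_inP.
Qed.

Definition score (J : {set T}) : nat :=
  lexw #|T| #|J| #|isolated_in J| #|high_in J|.

Lemma score_lt (J J' : {set T}) :
  [\/ #|J| < #|J'|,
      (#|J| <= #|J'|) && (#|isolated_in J| < #|isolated_in J'|) |
      [&& #|J| <= #|J'|, #|isolated_in J| <= #|isolated_in J'|
        & #|high_in J| < #|high_in J'|]] ->
  score J < score J'.
Proof. by apply: lexw_lt; exact: max_card. Qed.

Section Replacement.
Variables (J A : {set T}) (j a0 : T).
Hypotheses (admJ : admissible J) (jJ : j \in J) (AP : A \subset privates e J j)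
  (iA : indep A) (a0A : a0 \in A)
  (covA : forall p, p \in privates e J j -> p \notin A -> exists2 a, a \in A & e p a).

Let J' := (J :\ j) :|: A.

Lemma replaced_outside a : a \in A -> a \notin J.
Proof. by move/(subsetP AP)/private_outside. Qed.

Lemma replaced_no_edge a k : a \in A -> k \in J' -> ~~ e a k.
Proof.
move=> aA; rewrite inE => /orP[/setD1P[kj kJ]|kA]; last exact: indepP iA aA kA.
by apply: contra kj => ak; rewrite (private_unique (subsetP AP _ aA) kJ ak).
Qed.

Lemma replaced_inner_edge x y : e4 e J' x y -> e4 e J x y.
Proof.
case/and3P=> xy xJ' yJ'.
have inJ z w : z \in J' -> w \in J' -> e z w -> z \in J :\ j.
  move=> zJ' wJ' zw; case/setUP: zJ' => // zA.
  by move: (replaced_no_edge zA wJ'); rewrite zw.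
have /setD1P[_ xJ] := inJ _ _ xJ' yJ' xy.
have yx : e y x by rewrite esym.
have /setD1P[_ yJ] := inJ _ _ yJ' xJ' yx.
by rewrite /e4 xy xJ yJ.
Qed.

Lemma replaced_dominating : dominating J'.
Proof.
case: admJ => domJ _ _ x; rewrite !inE negb_or negb_and negbK => /andP[xj_or_out xA].
have [xP|xnP] := boolP (x \in privates e J j).
  by case: (covA xP xA) => a aA xa; exists a; rewrite // inE aA orbT.
case/orP: xj_or_out => [/eqP->|xJ].
  exists a0; first by rewrite inE a0A orbT.
  by rewrite esym; case: (private_adj (subsetP AP _ a0A)).
case: (domJ x xJ) => y yJ xy.
have [yj|yj] := eqVneq y j; last by exists y; rewrite // !inE yj yJ.
have xj : e x j by rewrite -yj.
case: (private_or_other_nb xJ jJ xj) => [xP|[k kJ xk]]; first by rewrite xP in xnP.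
by exists k; rewrite // inE kJ.
Qed.

Lemma replaced_admissible : admissible J'.
Proof.
case: admJ => _ matchJ [f fJ]; split; first exact: replaced_dominating.
- move=> x k k' xJ' kJ' k'J' xk xk'.
  have /and3P[_ xJ kJ] := replaced_inner_edge (introT and3P (And3 xk xJ' kJ')).
  have /and3P[_ _ k'J] := replaced_inner_edge (introT and3P (And3 xk' xJ' k'J')).
  exact: matchJ xJ kJ k'J xk xk'.
- exists f; apply: (witness_map_restrict (fJ)) => [x y /replaced_inner_edge //|x y Jxy].
  case: fJ => _ /(_ _ _ Jxy)[fJ fx fy] _; rewrite !inE negb_or negb_and fJ orbT /=.
  by apply/negP => /(subsetP AP) fP; exact: private_not_common_nb fP Jxy fx fy.
Qed.

Lemma replaced_card : #|J'| + 1 = #|J| + #|A|.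
Proof.
have disj : (J :\ j) :&: A = set0.
  apply/setP => x; rewrite !inE; apply/negbTE/negP.
  by case/andP=> /andP[_ xJ] /replaced_outside; rewrite xJ.
by rewrite cardsU disj cards0 subn0 (cardsD1 j J) jJ add1n addSn addn1.
Qed.

Lemma replaced_isolated : (isolated_in J :\ j) :|: A \subset isolated_in J'.
Proof.
apply/subsetP => x /setUP[/setD1P[xj /isolated_inP[xJ noadj]]|xA]; apply/isolated_inP.
  split; first by rewrite !inE xj xJ.
  move=> y /setUP[/setD1P[_ yJ]|yA]; first exact: noadj.
  by rewrite esym; apply: replaced_no_edge yA _; rewrite !inE xj xJ.
by split=> [|y yJ']; [rewrite inE xA orbT | exact: replaced_no_edge].
Qed.

Lemma replaced_isolated_nb x : x \in J -> x != j ->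
  (forall y, y \in J -> e x y -> y = j) -> x \in isolated_in J'.
Proof.
move=> xJ xj only_j; apply/isolated_inP; split=> [|y]; first by rewrite !inE xj xJ.
case/setUP=> [/setD1P[yj yJ]|yA]; first by apply: contra yj => /(only_j _ yJ)->.
by rewrite esym; apply: replaced_no_edge yA _; rewrite !inE xj xJ.
Qed.

End Replacement.

Section Addition.
Variables (J : {set T}) (j p q : T).
Hypotheses (admJ : admissible J) (jI : j \in isolated_in J)
  (pP : p \in privates e J j) (qP : q \in privates e J j) (pq : p != q) (epq : e p q).

Let J' := p |: J.

Lemma added_nb_of_p k : k \in J' -> e p k -> k = j.
Proof.
by case/setU1P=> [->|kJ pk]; [rewrite eirr | exact: private_unique pP kJ pk].
Qed.

Lemma added_nb_in_J x k : x \in J -> k \in J' -> e x k ->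
  if x == j then k = p else k \in J.
Proof.
move=> xJ /setU1P[->|kJ] xk.
  by rewrite (private_unique pP xJ) ?eqxx // esym.
case: eqP => [xj|//]; case/isolated_inP: jI => _ /(_ k kJ).
by rewrite -xj xk.
Qed.

Lemma added_inner_edge x y : e4 e J' x y -> [set x; y] = [set j; p] \/ e4 e J x y.
Proof.
case/and3P=> + xJ' yJ'; case/setU1P: xJ' => [->|xJ] xy.
  by left; rewrite (added_nb_of_p yJ' xy) setUC.
have := added_nb_in_J xJ yJ' xy; case: eqP => [-> ->|_ yJ]; first by left.
by right; rewrite /e4 xy xJ yJ.
Qed.

Lemma added_admissible : admissible J'.
Proof.
case: admJ => domJ matchJ [f fJ].
have qJ := private_outside qP; have [_ qj] := private_adj qP.
split.
- move=> x; rewrite !inE negb_or => /andP[_ xJ]; case: (domJ x xJ) => y yJ xy.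
  by exists y; rewrite // inE yJ orbT.
- move=> x k k' /setU1P[->|xJ] kJ' k'J' xk xk'.
    by rewrite (added_nb_of_p kJ' xk) (added_nb_of_p k'J' xk').
  move: (added_nb_in_J xJ kJ' xk) (added_nb_in_J xJ k'J' xk').
  by case: eqP => [_ -> ->|_ kJ k'J] //; exact: matchJ xJ kJ k'J xk xk'.
- exists (fun x y => if [set x; y] == [set j; p] then q else f x y).
  apply: (witness_map_add_edge (fJ) added_inner_edge); last by rewrite esym.
  + move=> x y Jxy; case: fJ => _ /(_ _ _ Jxy)[fJ fx fy] _.
    have not_priv i : i \in privates e J j -> f x y != i.
      by move=> iP; apply/eqP => fi; rewrite fi in fx fy; exact: private_not_common_nb iP Jxy fx fy.
    by rewrite !inE negb_or fJ andbT; split; exact: not_priv.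
  + by rewrite !inE negb_or qJ andbT eq_sym.
  + exact: qj.
Qed.

Lemma added_card : #|J'| = #|J|.+1.
Proof. by rewrite cardsU1 (private_outside pP). Qed.

End Addition.

Section Extremal.
Hypothesis enice : nice e.
Variable J : {set T}.
Hypotheses (admJ : admissible J) (Jmax : forall J', admissible J' -> score J' <= score J).

Lemma not_improvable J' : admissible J' -> score J < score J' -> False.
Proof. by move/Jmax; rewrite leqNgt => /negP. Qed.

Lemma matched_no_private j : j \in J -> j \notin isolated_in J -> privates e J j = set0.
Proof.
move=> jJ jnI; apply/eqP; apply: contraT => /set0Pn[t tP]; exfalso.
case: admJ => _ matchJ _; have [A [AP iA covA Amax]] := maximum_independent (privates e J j).
have A_gt0 : 0 < #|A| by rewrite -(cards1 t) Amax ?sub1set ?indep1.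
have /card_gt0P[a0 a0A] := A_gt0.
have [j' j'J jj'] : exists2 j', j' \in J & e j j'.
  by move: jnI; rewrite inE jJ => /forall_inPn[j' j'J /negPn jj']; exists j'.
have j'j : j' != j by apply: contraTneq jj' => ->; rewrite eirr.
have j'I : j' \in isolated_in ((J :\ j) :|: A).
  apply: (replaced_isolated_nb AP iA j'J j'j) => y yJ j'y.
  by apply: matchJ j'J yJ jJ j'y _; rewrite esym.
have j'nI : j' \notin isolated_in J by apply/isolated_inP => -[_ /(_ j jJ)]; rewrite esym jj'.
have IJ : isolated_in J \subset (isolated_in J :\ j) :|: A.
  apply/subsetP => x xI; rewrite in_setU in_setD1 xI andbT.
  by case: eqP xI => // ->; rewrite (negbTE jnI).
have gain : j' |: isolated_in J \subset isolated_in ((J :\ j) :|: A).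
  by rewrite subUset sub1set j'I (subset_trans IJ (replaced_isolated AP iA)).
apply: (not_improvable (replaced_admissible admJ jJ AP iA a0A covA)).
apply: score_lt; constructor 2; apply/andP; split.
  by rewrite -(leq_add2r 1) (replaced_card jJ AP) leq_add2l.
by move/subset_leq_card: gain; rewrite cardsU1 j'nI.
Qed.

Lemma isolated_few_private j : j \in isolated_in J -> #|privates e J j| <= 1.
Proof.
move=> jI; have jJ : j \in J by case/isolated_inP: jI.
rewrite leqNgt; apply/negP => /card_gt1P[p [q [pP qP pq]]].
have [pq_adj|pq_nadj] := boolP (e p q).
  apply: (not_improvable (added_admissible admJ jI pP qP pq pq_adj)).
  by apply: score_lt; constructor 1; rewrite (added_card pP).
have [A [AP iA covA Amax]] := maximum_independent (privates e J j).
have A2 : 2 <= #|A|.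
  have <- : #|[set p; q]| = 2 by rewrite cards2 pq.
  rewrite Amax ?indep2 //.
  by rewrite subUset !sub1set pP qP.
have [a0 a0A] : exists a0, a0 \in A by apply/card_gt0P; apply: leq_trans A2.
apply: (not_improvable (replaced_admissible admJ jJ AP iA a0A covA)).
by apply: score_lt; constructor 1; rewrite -(ltn_add2r 1) (replaced_card jJ AP) ltn_add2l.
Qed.

(* An isolated vertex j of G[J] of degree 1 in G has no private neighbour:
   otherwise swapping j with its neighbour y keeps |J| and the isolated count
   and, since G is nice, raises the number of vertices of degree >= 2. *)
Lemma leaf_no_private j y : j \in isolated_in J -> nbhd e j = [set y] ->
  y \notin privates e J j.
Proof.
move=> jI nbj; apply/negP => yP; have jJ : j \in J by case/isolated_inP: jI.
have yJ := private_outside yP.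
have jy : e j y by have := set11 y; rewrite -nbj inE.
have AP : [set y] \subset privates e J j by rewrite sub1set.
have covA p : p \in privates e J j -> p \notin [set y] -> exists2 a, a \in [set y] & e p a.
  move=> pP; have : p \in nbhd e j by rewrite inE esym; case: (private_adj pP).
  by rewrite nbj => ->.
have deg_j : deg e j = 1 by rewrite /deg nbj cards1.
have deg_y : 1 < deg e y.
  rewrite ltn_neqAle; apply/andP; split; last by apply/card_gt0P; exists j; rewrite inE esym.
  by apply/eqP => dy; apply: (enice (x := j) (y := y)).
have high_gain : y |: high_in J \subset high_in ((J :\ j) :|: [set y]).
  apply/subsetP => x /setU1P[->|/setIdP[xJ dx]]; rewrite inE ?deg_y ?dx andbT.
    by rewrite inE set11 orbT.
  by rewrite !inE xJ andbT; apply/orP; left; apply: contraTneq dx => ->; rewrite deg_j.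
apply: (not_improvable (replaced_admissible admJ jJ AP (indep1 y) (set11 y) covA)).
apply: score_lt; constructor 3; apply/and3P; split.
- by rewrite -(leq_add2r 1) (replaced_card jJ AP) cards1.
- apply: leq_trans (subset_leq_card (replaced_isolated AP (indep1 y))).
  rewrite setUC cardsU1 !inE (negbTE yJ) andbF (cardsD1 j (isolated_in J)) jI.
  by rewrite add1n.
- move/subset_leq_card: high_gain; rewrite cardsU1 inE (negbTE yJ).
  by rewrite add1n.
Qed.

(* If x is isolated
   in G[J], then y would be a private neighbour of the leaf x; otherwise the
   witness of the edge of G[J] at x is y, so y has two neighbours in J. *)
Lemma cut_edge_not_isolated x y :
  x \in J -> e3 e J x y -> deg3 e J x = 1 -> deg3 e J y = 1 -> False.
Proof.
case: admJ => _ _ [f [_ fadj _]] xJ /andP[xy]; rewrite xJ eq_sym eqb_id => yJ.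
move=> /eqP/cards1P[z Nx] /eqP/cards1P[w Ny].
have : y \in N3 e J x by rewrite N3_inside // yJ xy.
rewrite Nx => /set1P Ez; subst z.
have : x \in N3 e J y by rewrite N3_outside // xJ esym.
rewrite Ny => /set1P Ew; subst w.
case: (boolP (x \in isolated_in J)) => xI.
  have yP : y \in privates e J x by rewrite inE /private_nb yJ Ny eqxx.
  apply: (negP (leaf_no_private xI _)) yP.
  apply/setP => z; rewrite !inE; apply/idP/eqP => [xz|->//].
  have zJ : z \notin J by apply: contraL xz => zJ; case/isolated_inP: xI => _ /(_ z zJ).
  by apply/set1P; rewrite -Nx N3_inside // zJ xz.
move: xI; rewrite inE xJ => /forall_inPn[x' x'J /negPn xx'].
have Jxx' : e4 e J x x' by rewrite /e4 xx' xJ x'J.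
case: (fadj _ _ Jxx') => fJ fx fx'.
have : f x x' \in N3 e J x by rewrite N3_inside // fJ esym.
rewrite Nx => /set1P Ef; rewrite Ef in fx'.
have : x' \in N3 e J y by rewrite N3_outside // x'J fx'.
by rewrite Ny => /set1P Ex'; move: xx'; rewrite Ex' eirr.
Qed.

Lemma extremal_good : 0 < #|T| -> good_subset e J.
Proof.
move=> nT; case: (admJ) => domJ matchJ [f [fsym fadj finj]].
split; [|split; [|split; [|split; [|split]]]].
- case/card_gt0P: nT => x _; apply/set0Pn.
  by case: (boolP (x \in J)) => [xJ|/domJ[y yJ _]]; [exists x | exists y].
- move=> j jJ; apply/card_le1_eqP => a b; rewrite !inE.
  by case/and3P=> ja _ aJ /and3P[jb _ bJ]; exact: matchJ jJ bJ aJ jb ja.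
- move=> x y [xy [dx dy]]; case: (boolP (x \in J)) => xJ.
    exact: cut_edge_not_isolated xJ xy dx dy.
  have yJ : y \in J by move: xy => /andP[_]; rewrite (negbTE xJ); case: (y \in J).
  by apply: cut_edge_not_isolated yJ _ dy dx; rewrite /e3 esym eq_sym.
- move=> j jJ; case: (boolP (j \in isolated_in J)) => jI; first exact: isolated_few_private.
  by rewrite matched_no_private // cards0.
- have matched j j' : e4 e J j j' -> j \notin isolated_in J.
    by case/and3P=> jj' _ j'J; apply/isolated_inP => -[_ /(_ j' j'J)]; rewrite jj'.
  exists f; split=> //; split=> // j j' Jjj'; case: (fadj _ _ Jjj') => fJ fj fj'.
  case/and3P: (Jjj') => jj' jJ j'J.
  have Jj'j : e4 e J j' j by rewrite /e4 esym jj' jJ j'J.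
  have Pj := matched_no_private jJ (matched _ _ Jjj').
  have Pj' := matched_no_private j'J (matched _ _ Jj'j).
  by split; rewrite // N3_outside // ?jJ ?j'J.
- move=> x y [/and3P[_ xJ yJ] _].
  by split; [case: (domJ x xJ) | case: (domJ y yJ)] => z zJ wz; exists z; rewrite zJ wz.
Qed.

End Extremal.
End Graph.

Theorem lemma4p1 (T : finType) (e : rel T) :
  symmetric e -> irreflexive e -> nice e -> 0 < #|T| ->
  exists J : {set T}, good_subset e J.
Proof.
move=> esym eirr enice nT.
have [J admJ Jmax] := exists_maximizer (score e) (admissible_exists esym eirr).
by exists J; exact: extremal_good.
Qed.
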